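(* Let $K=\mathrm{SU}(2)$, $\mathcal{M}=\{(g_1,h_1,g_2,h_2)\in K^4:[g_1,h_1][g_2,h_2]=I\}/K$, and set $P_1=\{[a;b;b;a]: a,b\in K,\ [a,b]=I\}$ and $P_2=\{[a;b;b^{-1};a^{-1}]: a,b\in K,\ [a,b]=I\}$. For a commuting pair $(g,h)\in K^2$ let $$I_{(g,h)}=\{[g;h;khk^{-1};kgk^{-1}] : k\in K,\ k^2=-I\}\subset\mathcal{M}.$$ (1) If $(g,h)\notin\{(\pm I,\pm I)\}$, then $I_{(g,h)}\cong S^2/S^1$ is a closed interval: there is a homeomorphism $\mathfrak{I}_{(g,h)}:[0,1]\to I_{(g,h)}$ with $\mathfrak{I}_{(g,h)}(0)\in P_1$ (namely $[g;h;h;g]$), $\mathfrak{I}_{(g,h)}(1)\in P_2$ (namely $[g;h;h^{-1};g^{-1}]$), and $\mathfrak{I}_{(g,h)}(t)\notin P_1\cup P_2$ for all $t\in(0,1)$. (2) If $(g,h)=(\pm I,\pm I)$, then $I_{(g,h)}$ is a single point, one of $[I;I;I;I]$, $[I;-I;-I;I]$, $[-I;I;I;-I]$, $[-I;-I;-I;-I]$.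
   Context: $[a,b]=aba^{-1}b^{-1}$; $K$ acts by simultaneous conjugation and $[g_1;h_1;g_2;h_2]$ denotes a class in $\mathcal{M}$ (quotient topology). $P_1$ is the boundary surface of the ''Goldman pillow'' $\{[a;b;b;a]\}$ and $P_2$ the boundary surface of the second pillow $\{[a;b;kbk^{-1};kak^{-1}]: k^2=-I, [a,b]\text{ commutes with }k\}$ appearing in the fixed set of the involution $[g_1;h_1;g_2;h_2]\mapsto[h_2;g_2;h_1;g_1]$. *)

From HB Require Import structures.
From mathcomp Require Import all_boot all_order all_algebra.
From mathcomp Require Import all_classical all_reals all_analysis.
From mathcomp Require Import generic_quotient.
Set Implicit Arguments. Unset Strict Implicit. Unset Printing Implicit Defensive.
Import Order.TTheory GRing.Theory Num.Theory.
Import numFieldTopology.Exports.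
Local Open Scope classical_set_scope.
Local Open Scope ring_scope.
Local Open Scope quotient_scope.

Section SU2.
Variable R : realType.

(* A complex 2x2 matrix A + iB is encoded by the pair (A, B) of real
   2x2 matrices; the topology is the product of the matrix topologies,
   i.e. the usual topology of M_2(C) = R^8. *)
Definition cmx := ('M[R]_2 * 'M[R]_2)%type.

Definition cmul (u v : cmx) : cmx :=
  (u.1 *m v.1 - u.2 *m v.2, u.1 *m v.2 + u.2 *m v.1).
Definition cadj (u : cmx) : cmx := (u.1^T, - u.2^T).
Definition cone : cmx := (1%:M, 0).
Definition cmone : cmx := (- 1%:M, 0).

Definition zmul (z w : R * R) : R * R := (z.1 * w.1 - z.2 * w.2, z.1 * w.2 + z.2 * w.1).
Definition zsub (z w : R * R) : R * R := (z.1 - w.1, z.2 - w.2).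
Definition cdet (u : cmx) : R * R :=
  let z i j := (u.1 i j, u.2 i j) in
  zsub (zmul (z 0 0) (z 1 1)) (zmul (z 0 1) (z 1 0)).

Definition SU2 (u : cmx) : Prop := cmul u (cadj u) = cone /\ cdet u = (1, 0).

(* inverse in SU(2) is the conjugate transpose *)
Definition cinv (u : cmx) : cmx := cadj u.
Definition ccomm (a b : cmx) : cmx := cmul (cmul (cmul a b) (cinv a)) (cinv b).
Definition cconj (k x : cmx) : cmx := cmul (cmul k x) (cinv k).

Definition X4 := (cmx * cmx * cmx * cmx)%type.
Definition quad (g1 h1 g2 h2 : cmx) : X4 := (g1, h1, g2, h2).

Definition conj4 (k : cmx) (x : X4) : X4 :=
  let: (g1, h1, g2, h2) := x in
  (cconj k g1, cconj k h1, cconj k g2, cconj k h2).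

Definition Hom : set X4 := fun x =>
  let: (g1, h1, g2, h2) := x in
  [/\ SU2 g1, SU2 h1, SU2 g2, SU2 h2 &
      cmul (ccomm g1 h1) (ccomm g2 h2) = cone].

Definition HomT := set_type Hom.

Definition orbit (x : X4) : set X4 := [set y | exists k, SU2 k /\ y = conj4 k x].

Definition orb_rel : rel HomT := fun x y => `[< orbit (val x) = orbit (val y) >].

Lemma orb_rel_refl : reflexive orb_rel.
Proof. by move=> x; apply/asboolP. Qed.
Lemma orb_rel_sym : symmetric orb_rel.
Proof. by move=> x y; apply/idP/idP => /asboolP H; apply/asboolP. Qed.
Lemma orb_rel_trans : transitive orb_rel.
Proof. by move=> y x z /asboolP H1 /asboolP H2; apply/asboolP; rewrite H1. Qed.

Canonical orb_equiv := EquivRel orb_rel orb_rel_refl orb_rel_sym orb_rel_trans.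

Definition M := quotient_topology {eq_quot orb_equiv}.

Definition piM (x : HomT) : M := \pi_({eq_quot orb_equiv}) x.

(* [x] = m : the class in M of the quadruple x (x must lie in Hom) *)
Definition is_class (m : M) (x : X4) : Prop :=
  exists p : HomT, val p = x /\ m = piM p.

Definition P1 : set M := [set m | exists a b, [/\ SU2 a, SU2 b, ccomm a b = cone &
  is_class m (quad a b b a)]].
Definition P2 : set M := [set m | exists a b, [/\ SU2 a, SU2 b, ccomm a b = cone &
  is_class m (quad a b (cinv b) (cinv a))]].

Definition Iset (g h : cmx) : set M := [set m | exists k, [/\ SU2 k, cmul k k = cmone &
  is_class m (quad g h (cconj k h) (cconj k g))]].

End SU2.

Definition homeo_from_unit {R : realType} {Y : topologicalType} (f : R -> Y) (S : set Y) : Prop :=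
  [/\ {within `[0, 1], continuous f},
      {in `[0, 1] &, injective f},
      f @` `[0, 1] = S &
      forall U : set R, open U ->
        exists V : set Y, open V /\ f @` (U `&` `[0, 1]) = V `&` S].

From Pilot Require Import Defs.
From HB Require Import structures.
From mathcomp Require Import all_boot all_order all_algebra.
From mathcomp Require Import all_classical all_reals all_analysis.
From mathcomp Require Import generic_quotient ring lra.
Import Order.TTheory GRing.Theory Num.Theory.
Import numFieldTopology.Exports.
Local Open Scope classical_set_scope.
Local Open Scope ring_scope.
Set Implicit Arguments. Unset Strict Implicit. Unset Printing Implicit Defensive.

(* Through qmx, SU(2) is the group of unit quaternions.  A commuting pair (g, h),
   not both central, is simultaneously conjugate to a pair a0 + a1 i, b0 + b1 i
   with a1^2 + b1^2 > 0, and this conjugation does not change I_(g,h).  For such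
   a pair the k with k^2 = -1 are the pure unit quaternions; rotations about the
   i-axis fix g and h, and k, -k give the same point, so every point of I_(g,h)
   is the class of (g, h, k_t h k_t^-1, k_t g k_t^-1) with
   k_t = sqrt(1 - t) i + sqrt(t) j, t in [0, 1].  The class function
   Re tr(g1 h2) + Re tr(h1 g2) is affine in t with nonzero slope along this
   family, hence a continuous inverse of the path.  At t = 0, k_t = i commutes
   with g and h; at t = 1, k_t = j inverts them; for 0 < t < 1 it does neither,
   while a class in P1 (resp. P2) would force k_t to commute with (resp. invert)
   both. *)
Record quat (R : Type) := Quat { qre : R; qi : R; qj : R; qk : R }.
Arguments Quat {R}.
Arguments qre {R}.
Arguments qi {R}.
Arguments qj {R}.
Arguments qk {R}.

Lemma quatP (R : Type) (x y : quat R) :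
  qre x = qre y -> qi x = qi y -> qj x = qj y -> qk x = qk y -> x = y.
Proof. by case: x; case: y => /= ? ? ? ? ? ? ? ? -> -> -> ->. Qed.

Ltac qring := apply: quatP; rewrite /= ?expr2; ring.

Section Quaternions.
Variable R : comPzRingType.
Local Notation quat := (quat R).

Definition qreal (a : R) : quat := Quat a 0 0 0.
Definition qscale (a : R) (x : quat) : quat :=
  Quat (a * qre x) (a * qi x) (a * qj x) (a * qk x).
Definition qmul (x y : quat) : quat :=
  Quat (qre x * qre y - qi x * qi y - qj x * qj y - qk x * qk y)
       (qre x * qi y + qi x * qre y + qj x * qk y - qk x * qj y)
       (qre x * qj y + qj x * qre y + qk x * qi y - qi x * qk y)
       (qre x * qk y + qk x * qre y + qi x * qj y - qj x * qi y).
Definition qbar (x : quat) : quat := Quat (qre x) (- qi x) (- qj x) (- qk x).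
Definition qnorm (x : quat) : R := qre x ^+ 2 + qi x ^+ 2 + qj x ^+ 2 + qk x ^+ 2.
Definition qconjg (s x : quat) : quat := qmul (qmul s x) (qbar s).
Definition qcomm (x y : quat) : quat := qmul (qmul (qmul x y) (qbar x)) (qbar y).

Lemma qmulA x y z : qmul x (qmul y z) = qmul (qmul x y) z. Proof. qring. Qed.
Lemma qmul1r x : qmul (qreal 1) x = x. Proof. qring. Qed.
Lemma qmulr1 x : qmul x (qreal 1) = x. Proof. qring. Qed.
Lemma qscale1 x : qscale 1 x = x. Proof. qring. Qed.
Lemma qbar_mul x y : qbar (qmul x y) = qmul (qbar y) (qbar x). Proof. qring. Qed.
Lemma qmul_bar x : qmul x (qbar x) = qreal (qnorm x). Proof. rewrite /qnorm; qring. Qed.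
Lemma qmul_barl x : qmul (qbar x) x = qreal (qnorm x). Proof. rewrite /qnorm; qring. Qed.
Lemma qnorm_mul x y : qnorm (qmul x y) = qnorm x * qnorm y.
Proof. rewrite /qnorm /= ?expr2; ring. Qed.
Lemma qnorm_scale a x : qnorm (qscale a x) = a ^+ 2 * qnorm x.
Proof. rewrite /qnorm /= ?expr2; ring. Qed.
Lemma qnorm_bar x : qnorm (qbar x) = qnorm x.
Proof. rewrite /qnorm /= ?expr2; ring. Qed.

Lemma qconjg_mul s x y :
  qmul (qconjg s x) (qconjg s y) = qscale (qnorm s) (qconjg s (qmul x y)).
Proof. rewrite /qconjg /qnorm; qring. Qed.
Lemma qconjgM s1 s2 x : qconjg s1 (qconjg s2 x) = qconjg (qmul s1 s2) x.
Proof. rewrite /qconjg; qring. Qed.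
Lemma qconjg_real s a : qconjg s (qreal a) = qreal (qnorm s * a).
Proof. rewrite /qconjg /qnorm; qring. Qed.
Lemma qbar_conjg s x : qbar (qconjg s x) = qconjg s (qbar x).
Proof. rewrite /qconjg; qring. Qed.
Lemma qre_conjg s x : qre (qconjg s x) = qnorm s * qre x.
Proof. rewrite /qconjg /qnorm /= ?expr2; ring. Qed.
Lemma qconjg1 x : qconjg (qreal 1) x = x. Proof. rewrite /qconjg; qring. Qed.
Lemma qconjg_scale a s x : qconjg (qscale a s) x = qscale (a ^+ 2) (qconjg s x).
Proof. rewrite /qconjg; qring. Qed.

Section UnitQuaternions.
Variable s : quat.
Hypothesis s_unit : qnorm s = 1.

Lemma qconjg_mul1 x y : qmul (qconjg s x) (qconjg s y) = qconjg s (qmul x y).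
Proof. by rewrite qconjg_mul s_unit qscale1. Qed.
Lemma qconjg_real1 a : qconjg s (qreal a) = qreal a.
Proof. by rewrite qconjg_real s_unit mul1r. Qed.
Lemma qnorm_conjg x : qnorm (qconjg s x) = qnorm x.
Proof. by rewrite /qconjg !qnorm_mul qnorm_bar s_unit mul1r mulr1. Qed.
Lemma qconjgK x : qconjg (qbar s) (qconjg s x) = x.
Proof. by rewrite qconjgM qmul_barl s_unit qconjg1. Qed.
Lemma qcomm_conjg x y : qcomm (qconjg s x) (qconjg s y) = qconjg s (qcomm x y).
Proof. by rewrite /qcomm !qbar_conjg (qconjg_mul1 x) (qconjg_mul1 (qmul x y)) qconjg_mul1. Qed.
Lemma qconjg_conjg k x : qconjg (qconjg s k) (qconjg s x) = qconjg s (qconjg k x).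
Proof. by rewrite {1}/qconjg qbar_conjg !qconjg_mul1. Qed.

End UnitQuaternions.

Definition qC (a b : R) : quat := Quat a b 0 0.
Definition qvnorm (x : quat) : R := qi x ^+ 2 + qj x ^+ 2 + qk x ^+ 2.

Lemma qnorm_C a b : qnorm (qC a b) = a ^+ 2 + b ^+ 2.
Proof. by rewrite /qnorm /= expr0n /= !addr0. Qed.

Lemma qconjg_jk_C s0 s2 s3 c r :
  qconjg (Quat s0 0 s2 s3) (qC c r) =
  Quat (c * (s0 ^+ 2 + s2 ^+ 2 + s3 ^+ 2)) (r * (s0 ^+ 2 - s2 ^+ 2 - s3 ^+ 2))
       (r * (2 * s0 * s3)) (r * (- (2 * s0 * s2))).
Proof. rewrite /qconjg; qring. Qed.

Lemma qconjg_C_C p q c r : qconjg (qC p q) (qC c r) = qscale (p ^+ 2 + q ^+ 2) (qC c r).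
Proof. rewrite /qconjg; qring. Qed.

Lemma qconjg_C_ij p q c r :
  qconjg (qC p q) (Quat 0 c r 0) =
  Quat 0 (c * (p ^+ 2 + q ^+ 2)) (r * (p ^+ 2 - q ^+ 2)) (2 * p * q * r).
Proof. rewrite /qconjg; qring. Qed.

Lemma qconjg_ij_C c s x0 x1 :
  qconjg (Quat 0 c s 0) (qC x0 x1) =
  Quat (x0 * (c ^+ 2 + s ^+ 2)) (x1 * (c ^+ 2 - s ^+ 2)) (2 * x1 * c * s) 0.
Proof. rewrite /qconjg; qring. Qed.

Lemma qcomm_commuting x y : qnorm x = 1 -> qnorm y = 1 -> qmul x y = qmul y x ->
  qcomm x y = qreal 1.
Proof.
move=> Nx Ny Cxy.
by rewrite /qcomm Cxy -(qmulA y) qmul_bar Nx qmulr1 qmul_bar Ny.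
Qed.

End Quaternions.

Section MatrixModel.
Variable R : realType.
Local Notation quat := (quat R).

Definition mx2 (a b c d : R) : 'M[R]_2 :=
  \matrix_(i, j) if i == 0 then (if j == 0 then a else b) else (if j == 0 then c else d).

Lemma mx2P (A B : 'M[R]_2) :
  A 0 0 = B 0 0 -> A 0 1 = B 0 1 -> A 1 0 = B 1 0 -> A 1 1 = B 1 1 -> A = B.
Proof.
move=> E00 E01 E10 E11; apply/matrixP => i j.
by case: i => [[|[|i]] Hi] //; case: j => [[|[|j]] Hj] //;
  [move: E00 | move: E01 | move: E10 | move: E11]; congr (_ = _); congr (_ _ _); apply/val_inj.
Qed.

Definition qmx (x : quat) : cmx R :=
  (mx2 (qre x) (qj x) (- qj x) (qre x), mx2 (qi x) (qk x) (qk x) (- qi x)).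
Definition mxq (u : cmx R) : quat := Quat (u.1 0 0) (u.2 0 0) (u.1 0 1) (u.2 0 1).

Lemma qmxK : cancel qmx mxq.
Proof. by case=> a b c d; rewrite /mxq /qmx /= !mxE. Qed.

Lemma qmx_inj : injective qmx. Proof. exact: can_inj qmxK. Qed.

Lemma qmx_mul x y : cmul (qmx x) (qmx y) = qmx (qmul x y).
Proof.
by rewrite /cmul; congr (_, _); apply: mx2P; rewrite !mxE !big_ord_recl !big_ord0 !mxE /=; ring.
Qed.

Lemma qmx_bar x : cinv (qmx x) = qmx (qbar x).
Proof. by rewrite /cinv /cadj /qmx; congr (_, _); apply: mx2P; rewrite !mxE /= ?opprK. Qed.

Lemma qmx_one : cone R = qmx (qreal 1).
Proof. by rewrite /cone /qmx; congr (_, _); apply: mx2P; rewrite !mxE /= ?oppr0. Qed.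

Lemma qmx_mone : cmone R = qmx (qreal (-1)).
Proof. by rewrite /cmone /qmx; congr (_, _); apply: mx2P; rewrite !mxE /= ?oppr0. Qed.

Lemma SU2_qmx x : SU2 (qmx x) <-> qnorm x = 1.
Proof.
have det : cdet (qmx x) = (qnorm x, 0).
  by rewrite /cdet /zsub /zmul /qnorm !mxE /=; congr (_, _); rewrite ?expr2; ring.
rewrite /SU2 -[cadj _]/(cinv _) qmx_bar qmx_mul qmul_bar qmx_one det.
split=> [[/qmx_inj [] //]|->] //.
Qed.

Lemma sqr_sum4_eq0 (a b c d : R) :
  a ^+ 2 + b ^+ 2 + c ^+ 2 + d ^+ 2 = 0 -> [/\ a = 0, b = 0, c = 0 & d = 0].
Proof.
move/eqP; rewrite !paddr_eq0 ?addr_ge0 ?sqr_ge0 // !sqrf_eq0.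
by case/andP=> /andP[/andP[/eqP-> /eqP->] /eqP->] /eqP->.
Qed.

(* Writing u = (A, B), the trace of u u^* is the sum of the squares of the
   eight entries; subtracting twice Re (det u) leaves four squares, whose
   vanishing is exactly the shape [[a, b], [-b^*, a^*]] of qmx. *)
Lemma SU2P u : SU2 u -> exists2 x, u = qmx x & qnorm x = 1.
Proof.
case: u => A B [UU D].
have := congr1 (fun v : cmx R => v.1 0 0 + v.1 1 1) UU.
have := congr1 fst D.
rewrite /cmul /cadj /cone /cdet /zsub /zmul /= !mxE !big_ord_recl !big_ord0 /= !mxE /=.
have [-> ->] : lift ord0 ord0 = 1 :> 'I_2 /\ ord0 = 0 :> 'I_2 by split; apply/val_inj.
move=> det tr.
have [] := @sqr_sum4_eq0 (A 0 0 - A 1 1) (B 0 0 + B 1 1) (A 0 1 + A 1 0) (B 0 1 - B 1 0).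
  by nra.
move=> /subr0_eq A11 /addr0_eq B11 /addr0_eq A10 /subr0_eq B10.
exists (mxq (A, B)); last by rewrite /qnorm /=; nra.
by rewrite /qmx /mxq /=; congr (_, _); apply: mx2P; rewrite !mxE /= ?opprK.
Qed.

Lemma qmx_conjg k x : cconj (qmx k) (qmx x) = qmx (qconjg k x).
Proof. by rewrite /cconj qmx_bar !qmx_mul. Qed.

Lemma qmx_comm x y : ccomm (qmx x) (qmx y) = qmx (qcomm x y).
Proof. by rewrite /ccomm !qmx_bar !qmx_mul. Qed.

Lemma Hom_qmx a b c d :
  Defs.Hom (quad (qmx a) (qmx b) (qmx c) (qmx d)) <->
  [/\ qnorm a = 1, qnorm b = 1, qnorm c = 1, qnorm d = 1 &
      qmul (qcomm a b) (qcomm c d) = qreal 1].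
Proof.
rewrite /Defs.Hom /quad !qmx_comm qmx_mul qmx_one.
split=> [[/SU2_qmx-> /SU2_qmx-> /SU2_qmx-> /SU2_qmx-> /qmx_inj]|[Na Nb Nc Nd ->]] //.
by split=> //; apply/SU2_qmx.
Qed.

Lemma HomP (x : X4 R) : Defs.Hom x -> exists a b c d,
  x = quad (qmx a) (qmx b) (qmx c) (qmx d) /\
  [/\ qnorm a = 1, qnorm b = 1, qnorm c = 1, qnorm d = 1 &
      qmul (qcomm a b) (qcomm c d) = qreal 1].
Proof.
case: x => [[[g1 h1] g2] h2] Hx.
case: (Hx) => /SU2P[a Ea _] /SU2P[b Eb _] /SU2P[c Ec _] /SU2P[d Ed _] _; subst.
by exists a, b, c, d; split=> //; apply/Hom_qmx.
Qed.

Lemma Hom_commuting a b c d : qnorm a = 1 -> qnorm b = 1 -> qnorm c = 1 -> qnorm d = 1 ->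
  qmul a b = qmul b a -> qmul c d = qmul d c ->
  Defs.Hom (quad (qmx a) (qmx b) (qmx c) (qmx d)).
Proof.
move=> Na Nb Nc Nd Cab Ccd; apply/Hom_qmx; split=> //.
by rewrite !qcomm_commuting // qmulr1.
Qed.

Lemma conj4_qmx k a b c d :
  conj4 (qmx k) (quad (qmx a) (qmx b) (qmx c) (qmx d)) =
  quad (qmx (qconjg k a)) (qmx (qconjg k b)) (qmx (qconjg k c)) (qmx (qconjg k d)).
Proof. by rewrite /conj4 /quad !qmx_conjg. Qed.

Lemma quad_qmx_inj a b c d a' b' c' d' :
  quad (qmx a) (qmx b) (qmx c) (qmx d) = quad (qmx a') (qmx b') (qmx c') (qmx d') ->
  [/\ a = a', b = b', c = c' & d = d'].
Proof.
move=> E; split; apply: qmx_inj.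
- exact: (congr1 (fun x : X4 R => x.1.1.1) E).
- exact: (congr1 (fun x : X4 R => x.1.1.2) E).
- exact: (congr1 (fun x : X4 R => x.1.2) E).
- exact: (congr1 (fun x : X4 R => x.2) E).
Qed.

Lemma Hom_conj4 (k : cmx R) (x : X4 R) : SU2 k -> Defs.Hom x -> Defs.Hom (conj4 k x).
Proof.
case/SU2P=> s -> Ns /HomP[a [b [c [d [-> [Na Nb Nc Nd E]]]]]].
rewrite conj4_qmx; apply/Hom_qmx; rewrite !qnorm_conjg //.
by rewrite !qcomm_conjg // qconjg_mul1 // E qconjg_real1.
Qed.

Lemma orbit_conj4 (k : cmx R) (x : X4 R) :
  SU2 k -> Defs.Hom x -> Defs.orbit (conj4 k x) = Defs.orbit x.
Proof.
case/SU2P=> s -> Ns /HomP[a [b [c [d [-> _]]]]].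
rewrite eqEsubset; split=> _ [l [/SU2P[r -> Nr] ->]].
  exists (qmx (qmul r s)); split; first by rewrite SU2_qmx qnorm_mul Nr Ns mulr1.
  by rewrite !conj4_qmx !qconjgM.
exists (qmx (qmul r (qbar s))); split; first by rewrite SU2_qmx qnorm_mul qnorm_bar Nr Ns mulr1.
by rewrite !conj4_qmx !qconjgM -(qmulA r) qmul_barl Ns qmulr1.
Qed.

Lemma orbit_refl (x : X4 R) : Defs.Hom x -> Defs.orbit x x.
Proof.
case/HomP=> a [b [c [d [-> _]]]]; exists (qmx (qreal 1)).
split; first by rewrite SU2_qmx /qnorm /=; ring.
by rewrite conj4_qmx !qconjg1.
Qed.

Lemma piM_eq (p q : HomT R) : piM p = piM q <-> Defs.orbit (val p) = Defs.orbit (val q).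
Proof. by split=> [/eqquotP/asboolP|E]; last apply/eqquotP/asboolP. Qed.

Lemma HomT_Hom (p : HomT R) : Defs.Hom (val p).
Proof. exact: set_mem (valP p). Qed.

Lemma piM_conj (p q : HomT R) : piM p = piM q -> exists2 k, SU2 k & val p = conj4 k (val q).
Proof.
move/piM_eq => E; have : Defs.orbit (val p) (val p) by apply/orbit_refl/HomT_Hom.
by rewrite E => -[k []]; exists k.
Qed.

Definition mkHom (x : X4 R) (Hx : Defs.Hom x) : HomT R := exist _ x (mem_set Hx).

Lemma is_class_conj4 (m : M R) (k : cmx R) (x : X4 R) :
  SU2 k -> Defs.Hom x -> (is_class m (conj4 k x) <-> is_class m x).
Proof.
move=> Hk Hx; split=> -[p [Ep ->]].
  by exists (mkHom Hx); split=> //; apply/piM_eq; rewrite /= Ep orbit_conj4.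
by exists (mkHom (Hom_conj4 Hk Hx)); split=> //; apply/piM_eq; rewrite /= Ep orbit_conj4.
Qed.

Lemma is_class_inj (m m' : M R) (x : X4 R) : is_class m x -> is_class m' x -> m = m'.
Proof. by move=> [p [<- ->]] [q [Eq ->]]; congr piM; apply: val_inj. Qed.

End MatrixModel.

Lemma continuous_compose (U V W : topologicalType) (f : U -> V) (g : V -> W) :
  continuous f -> continuous g -> continuous (fun x => g (f x)).
Proof. by move=> cf cg x; exact: continuous_comp (cf x) (cg (f x)). Qed.

Section Continuity.
Variable R : realType.

Section RealFunctions.
Variable T : topologicalType.
Implicit Types f g : T -> R.

Lemma continuous_add f g : continuous f -> continuous g -> continuous (fun t => f t + g t).
Proof. by move=> cf cg t; exact: continuousD (cf t) (cg t). Qed.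
Lemma continuous_mul f g : continuous f -> continuous g -> continuous (fun t => f t * g t).
Proof. by move=> cf cg t; exact: continuousM (cf t) (cg t). Qed.
Lemma continuous_opp f : continuous f -> continuous (fun t => - f t).
Proof. by move=> cf t; exact: continuousN (cf t). Qed.
Lemma continuous_sqrt f : continuous f -> continuous (fun t => Num.sqrt (f t)).
Proof. by move=> cf; apply: continuous_compose cf (@sqrt_continuous R). Qed.

Lemma continuous_pair (U V : topologicalType) (f : T -> U) (g : T -> V) :
  continuous f -> continuous g -> continuous (fun t => (f t, g t)).
Proof. by move=> cf cg t; apply: cvg_pair; [exact: cf | exact: cg]. Qed.

Lemma continuous_mx2 (a b c d : T -> R) :
  continuous a -> continuous b -> continuous c -> continuous d ->
  continuous (fun t => mx2 (a t) (b t) (c t) (d t)).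
Proof.
move=> ca cb cc cd t A [P nbhsP sPA].
suff : \forall x \near t, forall i j, P i j (mx2 (a x) (b x) (c x) (d x) i j).
  by apply: filterS => x Px; apply: sPA.
apply: filter_forall => i; apply: filter_forall => j; have := nbhsP i j.
rewrite !mxE; case: i => [[|[|i]] Hi] //; case: j => [[|[|j]] Hj] //= => nbhs_ij;
  [ have := ca t _ nbhs_ij | have := cb t _ nbhs_ij
  | have := cc t _ nbhs_ij | have := cd t _ nbhs_ij ];
  by apply: (@filterS _ (nbhs t)) => x /=; rewrite mxE.
Qed.

End RealFunctions.

Definition clamp01 (t : R) : R := Num.min (Num.max t 0) 1.

Lemma clamp01_itv t : 0 <= clamp01 t <= 1.
Proof.
by rewrite /clamp01 minElt maxElt; case: (ltP t 0) => ?; case: ltP => ?; apply/andP; split; lra.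
Qed.

Lemma clamp01_id t : 0 <= t <= 1 -> clamp01 t = t.
Proof.
by case/andP=> t0 t1; rewrite /clamp01 minElt maxElt; case: (ltP t 0) => ?; case: ltP => ? //; lra.
Qed.

Lemma continuous_clamp01 : continuous clamp01.
Proof.
move=> t; apply: (@continuous_min R R (fun t => Num.max t 0) (fun=> 1)); last exact: cvg_cst.
by apply: (@continuous_max R R id (fun=> 0)); [exact: cvg_id | exact: cvg_cst].
Qed.

Lemma continuous_fst (U V : topologicalType) : continuous (@fst U V).
Proof. by move=> p; exact: cvg_fst. Qed.
Lemma continuous_snd (U V : topologicalType) : continuous (@snd U V).
Proof. by move=> p; exact: cvg_snd. Qed.

Ltac continuity := repeat match goal with
  | |- continuous (fun _ => _ + _) => apply: continuous_add
  | |- continuous (fun _ => _ * _) => apply: continuous_mul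
  | |- continuous (fun _ => - _) => apply: continuous_opp
  | |- continuous (fun _ => ?c) => exact: cst_continuous
  | _ => assumption
  end.

Section QuaternionFunctions.
Variable T : topologicalType.
Implicit Types F G : T -> quat R.

Definition qcontinuous F := [/\ continuous (fun t => qre (F t)), continuous (fun t => qi (F t)),
  continuous (fun t => qj (F t)) & continuous (fun t => qk (F t))].

Lemma qcontinuous_mul F G :
  qcontinuous F -> qcontinuous G -> qcontinuous (fun t => qmul (F t) (G t)).
Proof. by move=> [? ? ? ?] [? ? ? ?]; split=> /=; continuity. Qed.
Lemma qcontinuous_bar F : qcontinuous F -> qcontinuous (fun t => qbar (F t)).
Proof. by move=> [? ? ? ?]; split=> /=; continuity. Qed.
Lemma qcontinuous_cst x : qcontinuous (fun=> x).
Proof. by split=> /=; continuity. Qed.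
Lemma qcontinuous_conjg F G : qcontinuous F -> qcontinuous G ->
  qcontinuous (fun t => qconjg (F t) (G t)).
Proof. by move=> cF cG; do 2?apply: qcontinuous_mul => //; apply: qcontinuous_bar. Qed.

Lemma continuous_qmx F : qcontinuous F -> continuous (fun t => qmx (F t)).
Proof. by move=> [? ? ? ?]; apply: continuous_pair; apply: continuous_mx2; continuity. Qed.

Lemma qcontinuous_mxq (F : T -> cmx R) : continuous F -> qcontinuous (fun t => mxq (F t)).
Proof.
move=> cF; have entry (p : cmx R -> 'M[R]_2) i j :
    continuous p -> continuous (fun t => p (F t) i j).
  move=> cp; apply: (@continuous_compose _ _ _ (fun t => p (F t)) (fun A : 'M[R]_2 => A i j)).
    exact: continuous_compose cF cp.
  exact: coord_continuous.
by split; apply: entry; [exact: continuous_fst | exact: continuous_snd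
                         | exact: continuous_fst | exact: continuous_snd].
Qed.

End QuaternionFunctions.
End Continuity.

Section Rotations.
Variable R : realType.
Local Notation quat := (quat R).

(* s = (1 - u i) / |1 - u i| maps i to u, except for u = -i where s = j does. *)
Lemma unit_vector_rotation (u1 u2 u3 : R) : u1 ^+ 2 + u2 ^+ 2 + u3 ^+ 2 = 1 ->
  exists2 s, qnorm s = 1 & forall c r, qconjg s (qC c r) = Quat c (r * u1) (r * u2) (r * u3).
Proof.
move=> Nu; have [u1N|u1N] := eqVneq u1 (-1).
  have : (0 : R) ^+ 2 + u2 ^+ 2 + u3 ^+ 2 + 0 ^+ 2 = 0 by move: Nu; rewrite u1N; nra.
  case/sqr_sum4_eq0 => _ -> -> _.
  exists (Quat 0 0 1 0) => [|c r]; first by rewrite /qnorm /=; ring.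
  by rewrite qconjg_jk_C u1N; qring.
have u1_0 : 1 + u1 != 0.
  by rewrite addrC addr_eq0.
have u3sq : u3 ^+ 2 = 1 - u1 ^+ 2 - u2 ^+ 2 by rewrite -Nu; ring.
set n : R := Num.sqrt (2 * (1 + u1)).
have n2 : n ^+ 2 = 2 * (1 + u1).
  by rewrite sqr_sqrtr // pmulr_rge0 //; nra.
exists (qscale n^-1 (Quat (1 + u1) 0 (- u3) u2)) => [|c r].
  by rewrite qnorm_scale /qnorm /= exprVn n2 sqrrN u3sq; field.
by rewrite qconjg_scale qconjg_jk_C exprVn n2 sqrrN u3sq; apply: quatP => /=; field.
Qed.

Lemma commuting_parallel (x y : quat) : qmul x y = qmul y x -> 0 < qvnorm x ->
  exists l, [/\ qi y = l * qi x, qj y = l * qj x & qk y = l * qk x].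
Proof.
case: x y => x0 v1 v2 v3 [y0 w1 w2 w3]; rewrite /qvnorm /= => C nv_gt0.
have [C1 C2 C3] : [/\ v2 * w3 = v3 * w2, v3 * w1 = v1 * w3 & v1 * w2 = v2 * w1].
  by move: (congr1 qi C) (congr1 qj C) (congr1 qk C) => /= *; split; lra.
set nv := _ + _ + _ in nv_gt0 *; set d := v1 * w1 + v2 * w2 + v3 * w3.
have nv0 : nv != 0 by rewrite gt_eqF.
exists (d / nv); split; apply: (mulIf nv0); rewrite mulrAC mulfVK //.
- transitivity (v1 * d + v2 * (v2 * w1 - v1 * w2) + v3 * (v3 * w1 - v1 * w3)).
    by rewrite /nv /d; ring.
  by rewrite C3 C2 !subrr !mulr0 !addr0 mulrC.
- transitivity (v2 * d + v3 * (v3 * w2 - v2 * w3) + v1 * (v1 * w2 - v2 * w1)).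
    by rewrite /nv /d; ring.
  by rewrite C1 C3 !subrr !mulr0 !addr0 mulrC.
- transitivity (v3 * d + v1 * (v1 * w3 - v3 * w1) + v2 * (v2 * w3 - v3 * w2)).
    by rewrite /nv /d; ring.
  by rewrite C2 C1 !subrr !mulr0 !addr0 mulrC.
Qed.

Lemma commuting_conj_C (x y : quat) :
  qnorm x = 1 -> qnorm y = 1 -> qmul x y = qmul y x -> 0 < qvnorm x ->
  exists s a0 a1 b0 b1, [/\ qnorm s = 1, a0 ^+ 2 + a1 ^+ 2 = 1, b0 ^+ 2 + b1 ^+ 2 = 1,
    a1 != 0 & x = qconjg s (qC a0 a1) /\ y = qconjg s (qC b0 b1)].
Proof.
move=> Nx Ny C nv_gt0; have [l [w1 w2 w3]] := commuting_parallel C nv_gt0.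
set m := Num.sqrt (qvnorm x); have m_gt0 : 0 < m by rewrite sqrtr_gt0.
have m2 : m ^+ 2 = qvnorm x by rewrite sqr_sqrtr // ltW.
have m0 : m != 0 by rewrite gt_eqF.
have [s Ns rot] : exists2 s, qnorm s = 1 & forall c r,
    qconjg s (qC c r) = Quat c (r * (qi x / m)) (r * (qj x / m)) (r * (qk x / m)).
  by apply: unit_vector_rotation; rewrite !expr_div_n -!mulrDl m2 divff // gt_eqF.
have mK (a : R) : m * (a / m) = a by rewrite mulrCA divff // mulr1.
have Ex : x = qconjg s (qC (qre x) m) by rewrite rot !mK; case: (x).
have Ey : y = qconjg s (qC (qre y) (l * m)) by rewrite rot -!mulrA !mK -w1 -w2 -w3; case: (y).
exists s, (qre x), m, (qre y), (l * m); split=> //.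
- by rewrite -qnorm_C -Nx [in RHS]Ex qnorm_conjg.
- by rewrite -qnorm_C -Ny [in RHS]Ey qnorm_conjg.
Qed.

Lemma qsqr_neg1_pure (k : quat) : qnorm k = 1 -> qmul k k = qreal (-1) -> qre k = 0.
Proof.
rewrite /qnorm => Nk /(congr1 qre) /= Kk.
by apply/eqP; rewrite -sqrf_eq0; apply/eqP; nra.
Qed.

(* s = (r + y) + z i, normalized, turns r j into y j + z k and fixes the i-axis. *)
Lemma rotation_about_i (c r y z : R) : 0 <= r -> r ^+ 2 = y ^+ 2 + z ^+ 2 ->
  exists2 s, qnorm s = 1 /\ (forall a b, qconjg s (qC a b) = qC a b) &
    qconjg s (Quat 0 c r 0) = Quat 0 c y z.
Proof.
move=> r_ge0 r2; have [ry0|ry0] := eqVneq (r + y) 0.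
  have Ey : y = - r by lra.
  have Ez : z = 0 by apply/eqP; rewrite -sqrf_eq0; apply/eqP; nra.
  exists (qC 0 1); last by rewrite qconjg_C_ij Ey Ez; congr Quat; ring.
  split=> [|a b]; first by rewrite qnorm_C; ring.
  by rewrite qconjg_C_C expr0n expr1n add0r qscale1.
have N_gt0 : 0 < (r + y) ^+ 2 + z ^+ 2.
  by rewrite ltr_pwDl ?sqr_ge0 // lt_def sqr_ge0 sqrf_eq0 ry0.
set N := _ + _ in N_gt0; set n : R := Num.sqrt N.
have n2 : n ^+ 2 = N by rewrite sqr_sqrtr // ltW.
have z2 : z ^+ 2 = r ^+ 2 - y ^+ 2 by rewrite r2; ring.
have nN : n ^-1 ^+ 2 * N = 1 by rewrite exprVn n2 mulVf // gt_eqF.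
exists (qscale n^-1 (qC (r + y) z)).
  split=> [|a b]; first by rewrite qnorm_scale qnorm_C.
  by rewrite qconjg_scale qconjg_C_C -/N; apply: quatP => /=; rewrite mulrA nN mul1r.
rewrite qconjg_scale qconjg_C_ij exprVn n2 /N; apply: quatP => /=; rewrite ?mulr0 //.
- by field; rewrite -/N gt_eqF.
- by rewrite z2; field; rewrite -z2 -/N gt_eqF.
- by rewrite z2; field; rewrite -z2 -/N gt_eqF.
Qed.

End Rotations.

Section Invariant.
Variable R : realType.
Local Notation quat := (quat R).

Definition pairing (x : X4 R) : R :=
  qre (qmul (mxq x.1.1.1) (mxq x.2)) + qre (qmul (mxq x.1.1.2) (mxq x.1.2)).

Lemma pairing_qmx (a b c d : quat) :
  pairing (quad (qmx a) (qmx b) (qmx c) (qmx d)) = qre (qmul a d) + qre (qmul b c).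
Proof. by rewrite /pairing /quad !qmxK. Qed.

Lemma pairing_conj4 (k : cmx R) (x : X4 R) :
  SU2 k -> Defs.Hom x -> pairing (conj4 k x) = pairing x.
Proof.
case/SU2P=> s -> Ns /HomP[a [b [c [d [-> _]]]]].
by rewrite conj4_qmx !pairing_qmx !qconjg_mul1 // !qre_conjg Ns !mul1r.
Qed.

Lemma continuous_pairing : continuous pairing.
Proof.
have cq (p : X4 R -> cmx R) : continuous p -> qcontinuous (fun x => mxq (p x)).
  exact: qcontinuous_mxq.
have qre_mul (p p' : X4 R -> cmx R) : continuous p -> continuous p' ->
    continuous (fun x => qre (qmul (mxq (p x)) (mxq (p' x)))).
  by move=> cp cp'; have [] := qcontinuous_mul (cq _ cp) (cq _ cp').
have c1 : continuous (fun x : X4 R => x.1) by exact: continuous_fst.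
have c11 : continuous (fun x : X4 R => x.1.1).
  exact: (@continuous_compose _ _ _ (fun x : X4 R => x.1) fst c1 (@continuous_fst _ _)).
apply: continuous_add; apply: qre_mul; try exact: continuous_snd.
- exact: (@continuous_compose _ _ _ (fun x : X4 R => x.1.1) fst c11 (@continuous_fst _ _)).
- exact: (@continuous_compose _ _ _ (fun x : X4 R => x.1.1) snd c11 (@continuous_snd _ _)).
- exact: (@continuous_compose _ _ _ (fun x : X4 R => x.1) snd c1 (@continuous_snd _ _)).
Qed.

End Invariant.

Section Arc.
Variable R : realType.
Variables a0 a1 b0 b1 : R.
Hypothesis Na : a0 ^+ 2 + a1 ^+ 2 = 1.
Hypothesis Nb : b0 ^+ 2 + b1 ^+ 2 = 1.
Local Notation quat := (quat R).
Local Notation g := (qC a0 a1).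
Local Notation h := (qC b0 b1).

(* Clamping makes arc_rot t a unit quaternion for every real t, so that the
   path below is defined and continuous on all of R. *)
Definition arc_c (t : R) := Num.sqrt (1 - clamp01 t).
Definition arc_s (t : R) := Num.sqrt (clamp01 t).
Definition arc_rot (t : R) : quat := Quat 0 (arc_c t) (arc_s t) 0.

Lemma arc_c_sqr (t : R) : arc_c t ^+ 2 = 1 - clamp01 t.
Proof. by have /andP[_ ?] := clamp01_itv t; rewrite sqr_sqrtr // subr_ge0. Qed.
Lemma arc_s_sqr (t : R) : arc_s t ^+ 2 = clamp01 t.
Proof. by have /andP[? _] := clamp01_itv t; rewrite sqr_sqrtr. Qed.

Lemma qnorm_arc_rot (t : R) : qnorm (arc_rot t) = 1.
Proof. by rewrite /qnorm /= arc_c_sqr arc_s_sqr; ring. Qed.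

Lemma arc_rot_mul (t : R) : qmul (arc_rot t) (arc_rot t) = qreal (-1).
Proof. by apply: quatP => /=; rewrite -?expr2 ?arc_c_sqr ?arc_s_sqr; ring. Qed.

Lemma qconjg_arc_rot (t x0 x1 : R) : qconjg (arc_rot t) (qC x0 x1) =
  Quat x0 (x1 * (1 - 2 * clamp01 t)) (2 * x1 * arc_c t * arc_s t) 0.
Proof. by rewrite qconjg_ij_C arc_c_sqr arc_s_sqr; congr Quat; ring. Qed.

Definition arc_point (t : R) : X4 R :=
  quad (qmx g) (qmx h) (qmx (qconjg (arc_rot t) h)) (qmx (qconjg (arc_rot t) g)).

Lemma qnorm_g : qnorm g = 1. Proof. by rewrite qnorm_C. Qed.
Lemma qnorm_h : qnorm h = 1. Proof. by rewrite qnorm_C. Qed.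
Lemma gh_commute : qmul g h = qmul h g. Proof. qring. Qed.

Lemma Hom_arc_point (t : R) : Defs.Hom (arc_point t).
Proof.
have Nk := qnorm_arc_rot t.
apply: Hom_commuting; rewrite ?qnorm_conjg ?qnorm_g ?qnorm_h //; first exact: gh_commute.
by rewrite !qconjg_mul1 // gh_commute.
Qed.

Definition Iarc (t : R) : M R := piM (mkHom (Hom_arc_point t)).

Lemma arc_class (t : R) : is_class (Iarc t) (arc_point t).
Proof. by exists (mkHom (Hom_arc_point t)). Qed.

Lemma continuous_arc : continuous Iarc.
Proof.
have crot : qcontinuous arc_rot.
  split=> /=; try exact: cst_continuous; apply: continuous_sqrt; last exact: continuous_clamp01.
  apply: continuous_add; first exact: cst_continuous.
  by apply: continuous_opp; exact: continuous_clamp01.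
have cpt : continuous arc_point.
  apply: continuous_pair; last exact/continuous_qmx/qcontinuous_conjg/qcontinuous_cst.
  apply: continuous_pair; last exact/continuous_qmx/qcontinuous_conjg/qcontinuous_cst.
  by apply: continuous_pair; exact: cst_continuous.
apply: (continuous_compose (f := fun t => mkHom (Hom_arc_point t))); last exact: pi_continuous.
exact: continuous_comp_initial.
Qed.

Hypothesis D_gt0 : 0 < a1 ^+ 2 + b1 ^+ 2.
Local Notation D := (a1 ^+ 2 + b1 ^+ 2).

(* pairing (arc_point t) = a0^2 + b0^2 - D (1 - 2 clamp01 t) *)
Definition arc_param (x : X4 R) : R := (pairing x - (a0 ^+ 2 + b0 ^+ 2 - D)) / (2 * D).

Lemma arc_param_point (t : R) : arc_param (arc_point t) = clamp01 t.
Proof.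
rewrite /arc_param pairing_qmx !qconjg_arc_rot /=.
by field; rewrite gt_eqF.
Qed.

Definition arc_coord (m : M R) : R := arc_param (val (repr m)).

Lemma arc_coord_pi (p : HomT R) : arc_coord (piM p) = arc_param (val p).
Proof.
have /piM_conj[k Hk E] : piM (repr (piM p)) = piM p by rewrite /piM reprK.
by rewrite /arc_coord E /arc_param pairing_conj4 //; exact: HomT_Hom.
Qed.

Lemma arc_coord_arc (t : R) : arc_coord (Iarc t) = clamp01 t.
Proof. by rewrite arc_coord_pi arc_param_point. Qed.

Lemma continuous_arc_coord : continuous arc_coord.
Proof.
apply: (repr_comp_continuous (g := fun p : HomT R => arc_param (val p))).
  apply: continuous_compose; first exact: initial_continuous.
  apply: continuous_mul; last exact: cst_continuous.
  by apply: continuous_add; [exact: continuous_pairing | exact: cst_continuous].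
move=> p q /eqP E; apply/eqP.
by rewrite -!arc_coord_pi; congr arc_coord.
Qed.

Lemma arc_in_Iset (t : R) : Iset (qmx g) (qmx h) (Iarc t).
Proof.
exists (qmx (arc_rot t)); split; first exact/SU2_qmx/qnorm_arc_rot.
  by rewrite qmx_mul arc_rot_mul qmx_mone.
by rewrite !qmx_conjg; exact: arc_class.
Qed.

Lemma arc_point0 : arc_point 0 = quad (qmx g) (qmx h) (qmx h) (qmx g).
Proof.
have s0 : arc_s 0 = 0 by rewrite /arc_s clamp01_id ?lexx ?ler01 // sqrtr0.
rewrite /arc_point !qconjg_arc_rot s0 clamp01_id ?lexx ?ler01 //.
by congr quad; congr qmx; apply: quatP => /=; ring.
Qed.

Lemma arc_point1 : arc_point 1 = quad (qmx g) (qmx h) (qmx (qbar h)) (qmx (qbar g)).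
Proof.
have c1 : arc_c 1 = 0 by rewrite /arc_c clamp01_id ?lexx ?ler01 // subrr sqrtr0.
rewrite /arc_point !qconjg_arc_rot c1 clamp01_id ?lexx ?ler01 //.
by congr quad; congr qmx; apply: quatP => /=; ring.
Qed.

Lemma arc_class_conj4 (s : quat) (t : R) :
  qnorm s = 1 -> is_class (Iarc t) (conj4 (qmx s) (arc_point t)).
Proof.
move=> Ns; rewrite is_class_conj4 ?SU2_qmx //; first exact: arc_class.
exact: Hom_arc_point.
Qed.

Lemma arc_rot_conj (c y z : R) : c ^+ 2 + y ^+ 2 + z ^+ 2 = 1 ->
  exists e, e ^+ 2 = 1 /\ exists2 s, qnorm s = 1 /\ (forall a b, qconjg s (qC a b) = qC a b) &
    qconjg s (arc_rot (y ^+ 2 + z ^+ 2)) = qscale e (Quat 0 c y z).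
Proof.
move=> N; set t := y ^+ 2 + z ^+ 2.
have c2 : c ^+ 2 = 1 - t by rewrite /t; lra.
have t01 : 0 <= t <= 1.
  by apply/andP; split; [rewrite addr_ge0 ?sqr_ge0 | rewrite -subr_ge0 -c2 sqr_ge0].
have ct := clamp01_id t01.
exists (if 0 <= c then 1 else -1); split; first by case: ifP; rewrite ?sqrrN expr1n.
set e := if _ then _ else _.
have ec : e * c = arc_c t.
  rewrite /arc_c ct -c2 sqrtr_sqr /e; case: ifPn => [/ger0_norm|]; first by rewrite mul1r.
  by rewrite -ltNge => /ltr0_norm->; rewrite mulN1r.
have e2 : e ^+ 2 = 1 by rewrite /e; case: ifP; rewrite ?sqrrN expr1n.
have [s Ns rot] : exists2 s, qnorm s = 1 /\ (forall a b, qconjg s (qC a b) = qC a b) &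
    qconjg s (Quat 0 (arc_c t) (arc_s t) 0) = Quat 0 (arc_c t) (e * y) (e * z).
  by apply: rotation_about_i; rewrite ?sqrtr_ge0 // arc_s_sqr ct !exprMn e2 !mul1r.
by exists s => //; rewrite /arc_rot rot -ec; apply: quatP; rewrite /= ?mulr0.
Qed.

Lemma Iset_arc (m : M R) : Iset (qmx g) (qmx h) m -> exists2 t, 0 <= t <= 1 & m = Iarc t.
Proof.
case=> _ [/SU2P[k -> Nk] Kk]; rewrite !qmx_conjg => Cm.
have {}Kk : qmul k k = qreal (-1) by apply: qmx_inj; rewrite -qmx_mul -qmx_mone.
have := qsqr_neg1_pure Nk Kk; case: k Nk Cm {Kk} => k0 c y z Nk Cm /= k00; subst k0.
have {}Nk : c ^+ 2 + y ^+ 2 + z ^+ 2 = 1 by move: Nk; rewrite /qnorm /=; lra.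
have [e [e2 [s [Ns fix_C] rot_k]]] := arc_rot_conj Nk.
exists (y ^+ 2 + z ^+ 2).
  by apply/andP; split; [rewrite addr_ge0 ?sqr_ge0 | move: (sqr_ge0 c); lra].
have Es : conj4 (qmx s) (arc_point (y ^+ 2 + z ^+ 2)) =
    quad (qmx g) (qmx h) (qmx (qconjg (Quat 0 c y z) h)) (qmx (qconjg (Quat 0 c y z) g)).
  by rewrite conj4_qmx -!(qconjg_conjg Ns) rot_k !fix_C !qconjg_scale e2 !qscale1.
by apply: is_class_inj Cm _; rewrite -Es; exact: arc_class_conj4.
Qed.

Lemma arc_class_conj (t : R) (a b c d : quat) :
  is_class (Iarc t) (quad (qmx a) (qmx b) (qmx c) (qmx d)) ->
  exists2 s, qnorm s = 1 & [/\ g = qconjg s a, h = qconjg s b,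
    qconjg (arc_rot t) h = qconjg s c & qconjg (arc_rot t) g = qconjg s d].
Proof.
case=> p [Ep /piM_conj[_ /SU2P[s -> Ns]]].
by rewrite Ep conj4_qmx => /quad_qmx_inj[]; exists s.
Qed.

Lemma D_mul_eq0 (u : R) : a1 * u = 0 -> b1 * u = 0 -> u = 0.
Proof.
move=> au bu; have : D * u = 0 by rewrite mulrDl !expr2 -!mulrA au bu !mulr0 addr0.
by move/eqP; rewrite mulf_eq0 gt_eqF //= => /eqP.
Qed.

Lemma arc_notin_P1 (t : R) : 0 < t < 1 -> ~ P1 (Iarc t).
Proof.
move=> /andP[t0 t1] [_ [_ [/SU2P[a -> _] /SU2P[b -> _] _]]].
case/arc_class_conj=> s _ [Eg Eh Eh' Eg'].
move: (congr1 qj Eg') (congr1 qj Eh'); rewrite -Eg -Eh !qconjg_arc_rot /= => ja jb.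
have /eqP : 2 * arc_c t * arc_s t = 0 by apply: D_mul_eq0; [rewrite -ja | rewrite -jb]; ring.
rewrite /arc_c /arc_s clamp01_id ?(ltW t0) ?(ltW t1) // !mulf_eq0 !sqrtr_eq0 pnatr_eq0 /=.
by case/orP; rewrite leNgt ?subr_gt0 ?t0 ?t1.
Qed.

Lemma arc_notin_P2 (t : R) : 0 < t < 1 -> ~ P2 (Iarc t).
Proof.
move=> /andP[t0 t1] [_ [_ [/SU2P[a -> _] /SU2P[b -> _] _]]]; rewrite !qmx_bar.
case/arc_class_conj=> s _ [Eg Eh Eh' Eg'].
rewrite -!qbar_conjg -Eg -Eh in Eg' Eh'.
move: (congr1 qi Eg') (congr1 qi Eh').
rewrite !qconjg_arc_rot clamp01_id ?(ltW t0) ?(ltW t1) //= => ia ib.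
have : 2 - 2 * t = 0 by apply: D_mul_eq0; lra.
lra.
Qed.

Lemma arc_homeo : homeo_from_unit Iarc (Iset (qmx g) (qmx h)).
Proof.
have t01 (t : R) : t \in `[0, 1] -> 0 <= t <= 1 by rewrite in_itv.
have img : Iarc @` `[0, 1] = Iset (qmx g) (qmx h).
  apply/seteqP; split=> [m [t _ <-]|m /Iset_arc[t ? ->]]; first exact: arc_in_Iset.
  by exists t => //=; rewrite in_itv.
have coordK t : t \in `[0, 1] -> arc_coord (Iarc t) = t.
  by move/t01/clamp01_id => E; rewrite arc_coord_arc E.
split=> //.
- exact/continuous_subspaceT/continuous_arc.
- by move=> x y /coordK Ex /coordK Ey E; rewrite -Ex -Ey E.
move=> U oU; exists (arc_coord @^-1` U); split.
  by move/continuousP: continuous_arc_coord; apply.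
rewrite -img; apply/seteqP; split=> [m [t [Ut It] <-]|m [/= Um [t It Et]]].
  by split; [rewrite /= coordK | exists t].
by exists t => //; split=> //; rewrite -(coordK t It) Et.
Qed.

End Arc.

Section Reduction.
Variable R : realType.
Local Notation quat := (quat R).

Lemma is_class_qconjg (m : M R) (s a b c d : quat) : qnorm s = 1 ->
  Defs.Hom (quad (qmx a) (qmx b) (qmx c) (qmx d)) ->
  is_class m (quad (qmx (qconjg s a)) (qmx (qconjg s b)) (qmx (qconjg s c)) (qmx (qconjg s d))) <->
  is_class m (quad (qmx a) (qmx b) (qmx c) (qmx d)).
Proof. by move=> Ns Hx; rewrite -conj4_qmx is_class_conj4 // SU2_qmx. Qed.

Lemma Iset_conj_sub (s a b : quat) : qnorm s = 1 -> qnorm a = 1 -> qnorm b = 1 ->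
  qmul a b = qmul b a ->
  Iset (qmx a) (qmx b) `<=` Iset (qmx (qconjg s a)) (qmx (qconjg s b)).
Proof.
move=> Ns Na Nb Cab m [_ [/SU2P[k -> Nk] Kk]]; rewrite !qmx_conjg => Cm.
have {}Kk : qmul k k = qreal (-1) by apply: qmx_inj; rewrite -qmx_mul -qmx_mone.
exists (qmx (qconjg s k)); split.
- by rewrite SU2_qmx qnorm_conjg.
- by rewrite qmx_mul qconjg_mul1 // Kk qconjg_real1 // qmx_mone.
rewrite !qmx_conjg !qconjg_conjg // is_class_qconjg //.
apply: Hom_commuting; rewrite ?qnorm_conjg //.
by rewrite !qconjg_mul1 // Cab.
Qed.

Lemma Iset_conj (s a b : quat) : qnorm s = 1 -> qnorm a = 1 -> qnorm b = 1 ->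
  qmul a b = qmul b a ->
  Iset (qmx (qconjg s a)) (qmx (qconjg s b)) = Iset (qmx a) (qmx b).
Proof.
move=> Ns Na Nb Cab; apply/seteqP; split; last exact: Iset_conj_sub.
rewrite -{2}(qconjgK Ns a) -{2}(qconjgK Ns b).
apply: Iset_conj_sub; rewrite ?qnorm_bar ?qnorm_conjg //.
by rewrite !qconjg_mul1 // Cab.
Qed.

Lemma central_qvnorm (x : quat) : qnorm x = 1 -> qvnorm x = 0 ->
  qmx x = cone R \/ qmx x = cmone R.
Proof.
case: x => x0 x1 x2 x3; rewrite /qnorm /qvnorm /= => Nx.
move/eqP; rewrite !paddr_eq0 ?addr_ge0 ?sqr_ge0 // !sqrf_eq0.
case/andP=> /andP[/eqP x1_0 /eqP x2_0] /eqP x3_0; subst.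
have : x0 ^+ 2 = 1 by rewrite -Nx expr0n /= !addr0.
by move/eqP; rewrite sqrf_eq1 => /orP[]/eqP->; [left; rewrite qmx_one | right; rewrite qmx_mone].
Qed.

Lemma central_conj (k g : cmx R) : g = cone R \/ g = cmone R -> SU2 k -> cconj k g = g.
Proof.
move=> Hg /SU2P[s -> Ns].
by case: Hg => ->; rewrite ?qmx_one ?qmx_mone qmx_conjg qconjg_real1.
Qed.

Lemma Iset_central (g h : cmx R) : g = cone R \/ g = cmone R -> h = cone R \/ h = cmone R ->
  Iset g h = [set m | is_class m (quad g h h g)].
Proof.
move=> Hg Hh; apply/seteqP; split=> m.
  by case=> k [Hk _]; rewrite /= !central_conj.
move=> Cm; exists (qmx (Quat 0 1 0 0)); split.
- by rewrite SU2_qmx /qnorm /=; ring.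
- by rewrite qmx_mul qmx_mone; congr qmx; qring.
- by rewrite !central_conj // SU2_qmx /qnorm /=; ring.
Qed.

Lemma commuting_reduction (g h : cmx R) : SU2 g -> SU2 h -> cmul g h = cmul h g ->
  ~ ((g = cone R \/ g = cmone R) /\ (h = cone R \/ h = cmone R)) ->
  exists s a0 a1 b0 b1, [/\ qnorm s = 1, a0 ^+ 2 + a1 ^+ 2 = 1, b0 ^+ 2 + b1 ^+ 2 = 1,
    0 < a1 ^+ 2 + b1 ^+ 2 & g = qmx (qconjg s (qC a0 a1)) /\ h = qmx (qconjg s (qC b0 b1))].
Proof.
move=> /SU2P[x -> Nx] /SU2P[y -> Ny]; rewrite !qmx_mul => /qmx_inj C NC.
have sq_gt0 (u : R) : u != 0 -> 0 < u ^+ 2 by rewrite lt_def sqr_ge0 sqrf_eq0 andbT.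
have [vx|vx] := ltP 0 (qvnorm x).
  have [s [a0 [a1 [b0 [b1 [Ns Na Nb a1N0 [-> ->]]]]]]] := commuting_conj_C Nx Ny C vx.
  by exists s, a0, a1, b0, b1; split=> //; apply: ltr_pwDl; rewrite ?sqr_ge0 ?sq_gt0.
have vx0 : qvnorm x = 0 by apply/eqP; rewrite eq_le vx /qvnorm !addr_ge0 ?sqr_ge0.
have [vy|vy] := ltP 0 (qvnorm y).
  have [s [b0 [b1 [a0 [a1 [Ns Nb Na b1N0 [-> ->]]]]]]] := commuting_conj_C Ny Nx (esym C) vy.
  by exists s, a0, a1, b0, b1; split=> //; apply: ltr_pwDr; rewrite ?sqr_ge0 ?sq_gt0.
have vy0 : qvnorm y = 0 by apply/eqP; rewrite eq_le vy /qvnorm !addr_ge0 ?sqr_ge0.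
by case: NC; split; exact: central_qvnorm.
Qed.

End Reduction.

Theorem mainTheorem14 (R : realType) (g h : cmx R) :
  SU2 g -> SU2 h -> cmul g h = cmul h g ->
  (~ ((g = @cone R \/ g = @cmone R) /\ (h = @cone R \/ h = @cmone R)) ->
     exists f : R -> M R,
       [/\ homeo_from_unit f (Iset g h),
           is_class (f 0) (quad g h h g) /\ P1 (f 0),
           is_class (f 1) (quad g h (cinv h) (cinv g)) /\ P2 (f 1) &
           forall t, t \in `]0, 1[ -> ~ (@P1 R `|` @P2 R) (f t)])
  /\
  ((g = @cone R \/ g = @cmone R) -> (h = @cone R \/ h = @cmone R) ->
     Iset g h = [set m | is_class m (quad g h h g)]).
Proof.
move=> Hg Hh Cgh; split; last exact: Iset_central.
case/(commuting_reduction Hg Hh Cgh)=> s [a0 [a1 [b0 [b1 [Ns Na Nb D [Eg Eh]]]]]].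
have [Nga Nhb] := (qnorm_g Na, qnorm_h Nb).
have Cgh' := gh_commute a0 a1 b0 b1.
have comm1 : ccomm g h = cone R.
  rewrite Eg Eh qmx_comm (qcomm_conjg Ns) (qcomm_commuting Nga Nhb Cgh').
  by rewrite (qconjg_real1 Ns) qmx_one.
exists (Iarc Na Nb); split.
- by rewrite Eg Eh (Iset_conj Ns Nga Nhb Cgh'); exact: arc_homeo.
- suff C0 : is_class (Iarc Na Nb 0) (quad g h h g) by split=> //; exists g, h.
  by rewrite Eg Eh -conj4_qmx -arc_point0; exact: arc_class_conj4.
- suff C1 : is_class (Iarc Na Nb 1) (quad g h (cinv h) (cinv g)) by split=> //; exists g, h.
  by rewrite Eg Eh !qmx_bar !qbar_conjg -conj4_qmx -arc_point1; exact: arc_class_conj4.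
- by move=> t; rewrite in_itv => t01 [/(arc_notin_P1 D t01)|/(arc_notin_P2 D t01)].
Qed.
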